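(* Let $N\ge2$, $\Omega=\mathbb{R}^{N-1}\times(0,\infty)$, $D=\overline{\Omega}\times\overline{\Omega}\times(0,\infty)$, and fix $\epsilon>0$, $\delta>0$, $k>0$. Let \[ H(x,y,t):=-2\int_0^t\Gamma_{N-1}\!\left(x'-y',\frac{t-\tau}{\epsilon}+\frac{k}{\delta}\tau\right)\partial_{\xi}\Gamma_1\!\left(x_N+y_N+\frac{\tau}{\delta},\frac{t-\tau}{\epsilon}\right)d\tau,\quad (x,y,t)\in D. \] Set $\Lambda:=\max\{\delta,k\epsilon\}$, $\lambda:=\min\{\delta,k\epsilon\}$. Then there exists $C>0$ such that for all $(x,y,t)\in D$, \[ C^{-1}\underline{h}(x,y,t)\,\Gamma_{N-1}\!\left(x'-y',\frac{\lambda}{\epsilon\delta}t\right)\le H(x,y,t)\le C\,\overline{h}(x,y,t)\,\Gamma_{N-1}\!\left(x'-y',\frac{\Lambda}{\epsilon\delta}t\right), \] where $\overline h=\underline h=1$ on $D_1$; $\overline h=\Gamma_1(x_N+y_N,t/\epsilon)$ and $\underline h=\Gamma_1(x_N+y_N,t/(2\epsilon))$ on $D_2\cup D_4$; $\overline h=(x_N+y_N+t/\delta)\Gamma_1(x_N+y_N,t/\epsilon)$ and $\underline h=(x_N+y_N+t/\delta)\Gamma_1(x_N+y_N,t/(2\epsilon))$ on $D_3$. Here $D_1=\{(x,y,t)\in D:\epsilon(x_N+y_N)^2<6t,\ t<12\delta^2/\epsilon\}$, $D_2=\{(x,y,t)\in D:\epsilon(x_N+y_N)^2<6t,\ t\ge12\delta^2/\epsilon\}$,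 $D_3=\{(x,y,t)\in D:\epsilon(x_N+y_N)^2\ge6t,\ x_N+y_N+t/\delta<\delta/\epsilon\}$, $D_4=\{(x,y,t)\in D:\epsilon(x_N+y_N)^2\ge6t,\ x_N+y_N+t/\delta\ge\delta/\epsilon\}$.
   Context: Points are written $x=(x',x_N)$ with $x'\in\mathbb{R}^{N-1}$, $x_N\ge0$. For $d\ge1$, $\Gamma_d(x,t)=(4\pi t)^{-d/2}\exp(-|x|^2/(4t))$ on $\mathbb{R}^d\times(0,\infty)$; $\partial_\xi\Gamma_1(\xi,s)$ is the derivative of $\Gamma_1$ in its spatial variable. *)

From Stdlib Require Import Reals.
From Coquelicot Require Import Coquelicot.
Open Scope R_scope.

(* Squared Euclidean distance between the first n coordinates of u and v:
   points of R^n are represented by functions nat -> R, only indices < n matter. *)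
Fixpoint sqdist (n : nat) (u v : nat -> R) : R :=
  match n with
  | O => 0
  | S m => sqdist m u v + (u m - v m) ^ 2
  end.

(* Heat kernel in dimension d, given the squared norm r2 = |z|^2 of the point z:
   Gamma_d(z,t) = (4 pi t)^(-d/2) exp(-|z|^2/(4t)). *)
Definition Gammad (d : nat) (r2 t : R) : R :=
  / Rpower (4 * PI * t) (INR d / 2) * exp (- r2 / (4 * t)).

Definition GammaN1 (N : nat) (x' y' : nat -> R) (t : R) : R :=
  Gammad (N - 1) (sqdist (N - 1) x' y') t.

Definition Gamma1 (xi s : R) : R := Gammad 1 (xi ^ 2) s.

Definition dGamma1 (xi s : R) : R := Derive (fun z => Gamma1 z s) xi.

Definition Hker (N : nat) (eps delta k : R) (x' : nat -> R) (xN : R)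
    (y' : nat -> R) (yN : R) (t : R) : R :=
  -2 * RInt (fun tau =>
        GammaN1 N x' y' ((t - tau) / eps + k / delta * tau)
        * dGamma1 (xN + yN + tau / delta) ((t - tau) / eps)) 0 t.

(* With a = x_N + y_N, s(τ) = (t - τ)/ε and ξ(τ) = a + τ/δ, the kernel is
   H = ∫_0^t Γ_{N-1}(x' - y', T(τ)) J(τ) dτ, where J = -2 ∂_ξΓ_1(ξ, s) >= 0 and
   T(τ) = (t - τ)/ε + kτ/δ is a convex combination of t/ε and kt/δ, hence lies between
   λt/(εδ) and Λt/(εδ).  On that time range Γ_{N-1}(z, .) varies by at most the factor
   (Λ/λ)^((N-1)/2), so H is comparable to Γ_{N-1}(x' - y', λt/(εδ) resp. Λt/(εδ)) times
   I = ∫_0^t J.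

   I has no closed form, but Φ(τ) = 4 √s e^{-ξ²/(4s)} / B with B = a + (2t - τ)/δ
   satisfies κ Φ' = -J (1 + 2s/B²), κ = ε/√(4π).  As B >= A = a + t/δ,
   integrating over [τ0, t] gives
     κ Φ(τ0) / (1 + 2 s(τ0)/A²) <= ∫_{τ0}^t J <= κ Φ(τ0),
   and κ Φ(0) = 4t Γ_1(a, t/ε) / (a + 2t/δ).  The regions D1-D4 are elementary case
   analyses of these bounds; in D1 one takes τ0 = t - εA²/36, where s(τ0) = A²/36. *)

From Stdlib Require Import Reals Lra Psatz.
From Coquelicot Require Import Coquelicot.
Open Scope R_scope.

Lemma exp_le x y : x <= y -> exp x <= exp y.
Proof. intros [H | ->]; [left; apply exp_increasing|]; lra. Qed.

Lemma exp_neg_mul_1p_le u : 0 <= u -> exp (- u) * (1 + u) <= 1.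
Proof.
  intros Hu. pose proof (exp_ineq1_le u). pose proof (exp_pos (- u)).
  assert (exp (- u) * exp u = 1) by (rewrite <- exp_plus, Rplus_opp_l; apply exp_0).
  nra.
Qed.

Lemma exp_neg_mul_sq_le y : 0 <= y -> exp (- y) * y ^ 2 <= 4.
Proof.
  intros Hy. rewrite exp_Ropp.
  assert (Hh : exp y = exp (y / 2) * exp (y / 2)) by (rewrite <- exp_plus; f_equal; field).
  pose proof (exp_ineq1_le (y / 2)). pose proof (exp_pos y).
  assert (y ^ 2 <= 4 * exp y) by (rewrite Hh; nra).
  apply Rmult_le_reg_l with (exp y); [lra|]. field_simplify; lra.
Qed.

Lemma exp_gauss_mul_pow4_le x s : 0 < s -> exp (- x ^ 2 / (4 * s)) * x ^ 4 <= 64 * s ^ 2.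
Proof.
  intros Hs. set (y := x ^ 2 / (4 * s)).
  assert (Hy : 0 <= y) by (apply Rdiv_le_0_compat; [apply pow2_ge_0 | lra]).
  pose proof (exp_neg_mul_sq_le y Hy) as H.
  replace (- x ^ 2 / (4 * s)) with (- y) by (unfold y; field; lra).
  replace (x ^ 4) with (16 * s ^ 2 * y ^ 2) by (unfold y; field; lra).
  assert (0 < s ^ 2) by (apply pow_lt, Hs). nra.
Qed.

Lemma sqrt2_le_3_2 : sqrt 2 <= 3 / 2.
Proof. rewrite <- (sqrt_pow2 (3 / 2)) by lra. apply sqrt_le_1_alt. lra. Qed.

Lemma sqrt_4PI_bounds : 1 <= sqrt (4 * PI) <= 4.
Proof.
  pose proof PI_RGT_0. pose proof PI_4. pose proof PI2_1. split.
  - rewrite <- sqrt_1. apply sqrt_le_1_alt. lra.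
  - rewrite <- (sqrt_pow2 4) at 2 by lra. apply sqrt_le_1_alt. lra.
Qed.

Lemma Rmin_Rmax_convex x y p q : 0 <= p -> 0 <= q ->
  Rmin x y * (p + q) <= x * p + y * q <= Rmax x y * (p + q).
Proof.
  intros Hp Hq. unfold Rmin, Rmax. destruct (Rle_dec x y); split; nra.
Qed.

(** * Truncation at an endpoint *)

Definition trunc_at (t : R) (f : R -> R) (z : R) : R := if Rlt_dec z t then f z else 0.

Lemma trunc_at_lt t f z : z < t -> trunc_at t f z = f z.
Proof. intros Hz. unfold trunc_at. destruct (Rlt_dec z t); [reflexivity | lra]. Qed.

Lemma trunc_at_ge t f z : t <= z -> trunc_at t f z = 0.
Proof. intros Hz. unfold trunc_at. destruct (Rlt_dec z t); [lra | reflexivity]. Qed.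

Lemma trunc_at_locally_lt t f z : z < t -> locally z (fun y => f y = trunc_at t f y).
Proof.
  intros Hz. apply (filter_imp (fun y => y < t)); [|apply open_lt, Hz].
  intros y Hy. symmetry. apply trunc_at_lt, Hy.
Qed.

Lemma continuous_trunc_at_lt t f z : z < t -> continuous f z -> continuous (trunc_at t f) z.
Proof. intros Hz. apply continuous_ext_loc, trunc_at_locally_lt, Hz. Qed.

Lemma is_derive_trunc_at_lt t f z l : z < t -> is_derive f z l -> is_derive (trunc_at t f) z l.
Proof. intros Hz. apply is_derive_ext_loc, trunc_at_locally_lt, Hz. Qed.

Lemma continuous_trunc_at_gt t f z : t < z -> continuous (trunc_at t f) z.
Proof.
  intros Hz. apply continuous_ext_loc with (fun _ => 0); [|apply continuous_const].
  apply (filter_imp (fun y => t < y)); [|apply open_gt, Hz].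
  intros y Hy. symmetry. apply trunc_at_ge. lra.
Qed.

Lemma continuous_trunc_at_end t f g rho : 0 < rho ->
  (forall z, t - rho < z < t -> Rabs (f z) <= g z) ->
  continuous g t -> g t = 0 -> continuous (trunc_at t f) t.
Proof.
  intros Hr Hb Hg Hg0. apply continuity_pt_filterlim, continuity_pt_locally.
  intros e. apply continuity_pt_filterlim in Hg. rewrite continuity_pt_locally in Hg.
  assert (Hnear : locally t (fun u => t - rho < u)) by (apply open_gt; lra).
  generalize (filter_and _ _ (Hg e) Hnear). apply filter_imp. intros u [Hgu Hu].
  rewrite Hg0, Rminus_0_r in Hgu.
  rewrite (trunc_at_ge t f t), Rminus_0_r by lra.
  destruct (Rlt_le_dec u t) as [Hut | Htu].
  - rewrite trunc_at_lt by exact Hut.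
    specialize (Hb u (conj Hu Hut)). apply Rabs_def2 in Hgu. lra.
  - rewrite trunc_at_ge, Rabs_R0 by exact Htu. apply cond_pos.
Qed.

Lemma RInt_le_increment (f F dF : R -> R) u v : u <= v ->
  (forall z, continuous f z) ->
  (forall z, u < z < v -> is_derive F z (dF z)) ->
  (forall z, u <= z <= v -> continuity_pt F z) ->
  (forall z, u <= z <= v -> f z <= dF z) ->
  RInt f u v <= F v - F u.
Proof.
  intros Huv Hf HF HFc Hle.
  assert (Hex : forall b, ex_RInt f u b)
    by (intros b; apply (@ex_RInt_continuous R_CompleteNormedModule); auto).
  assert (HI : forall z, is_derive (fun x => RInt f u x) z (f z)).
  { intros z. apply (is_derive_RInt f _ u z); [|apply Hf].
    apply filter_forall. intros b. apply (@RInt_correct R_CompleteNormedModule), Hex. }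
  destruct (MVT_gen (fun x => F x - RInt f u x) u v (fun z => dF z - f z)) as [c [Hc Hmvt]];
    rewrite Rmin_left, Rmax_right in * by lra.
  - intros z Hz. apply (is_derive_minus F (fun x => RInt f u x)); [apply HF, Hz | apply HI].
  - intros z Hz. apply continuity_pt_minus; [apply HFc, Hz|].
    apply continuity_pt_filterlim, (@ex_derive_continuous R_AbsRing R_NormedModule).
    eexists; apply HI.
  - rewrite RInt_point in Hmvt. unfold zero in Hmvt; simpl in Hmvt.
    specialize (Hle c Hc). nra.
Qed.

Lemma RInt_ge_increment (f F dF : R -> R) u v : u <= v ->
  (forall z, continuous f z) ->
  (forall z, u < z < v -> is_derive F z (dF z)) ->
  (forall z, u <= z <= v -> continuity_pt F z) ->
  (forall z, u <= z <= v -> dF z <= f z) ->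
  F v - F u <= RInt f u v.
Proof.
  intros Huv Hf HF HFc Hle.
  pose proof (RInt_le_increment (fun x => - f x) (fun x => - F x) (fun x => - dF x) u v Huv)
    as H.
  rewrite (RInt_opp f) in H
    by (apply (@ex_RInt_continuous R_CompleteNormedModule); auto).
  unfold opp in H; simpl in H. enough (- RInt f u v <= - F v - - F u) by lra.
  apply H.
  - intros z. apply (@continuous_opp R_UniformSpace R_AbsRing R_NormedModule), Hf.
  - intros z Hz. apply (is_derive_opp F), HF, Hz.
  - intros z Hz. apply continuity_pt_opp, HFc, Hz.
  - intros z Hz. specialize (Hle z Hz). lra.
Qed.

(** * Heat kernels *)

Lemma Gamma1_E x s : 0 < s -> Gamma1 x s = exp (- x ^ 2 / (4 * s)) / sqrt (4 * PI * s).
Proof.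
  intros Hs. unfold Gamma1, Gammad.
  replace (INR 1 / 2) with (/ 2) by (simpl; field).
  rewrite Rpower_sqrt by (pose proof PI_RGT_0; nra).
  unfold Rdiv. ring.
Qed.

Lemma Gamma1_pos x s : 0 < s -> 0 < Gamma1 x s.
Proof.
  intros Hs. rewrite Gamma1_E by exact Hs. apply Rdiv_lt_0_compat; [apply exp_pos|].
  apply sqrt_lt_R0. pose proof PI_RGT_0; nra.
Qed.

Lemma dGamma1_E x s : 0 < s -> dGamma1 x s = - x / (2 * s) * Gamma1 x s.
Proof.
  intros Hs. rewrite Gamma1_E by exact Hs. unfold dGamma1. apply is_derive_unique.
  assert (Hq : 0 < sqrt (4 * PI * s)) by (apply sqrt_lt_R0; pose proof PI_RGT_0; nra).
  apply is_derive_ext with (fun z => exp (- z ^ 2 / (4 * s)) / sqrt (4 * PI * s)).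
  - intros z. symmetry. apply Gamma1_E, Hs.
  - auto_derive; [lra|].
    replace (- (x * (x * 1)) * / (4 * s)) with (- x ^ 2 / (4 * s)) by (field; lra).
    field. lra.
Qed.

Lemma Gamma1_half_time x s : 0 < s ->
  Gamma1 x (s / 2) = sqrt 2 * exp (- (x ^ 2 / (4 * s))) * Gamma1 x s.
Proof.
  intros Hs. pose proof PI_RGT_0.
  rewrite !Gamma1_E by lra.
  replace (4 * PI * s) with (4 * PI * (s / 2) * 2) by field.
  rewrite (sqrt_mult (4 * PI * (s / 2)) 2) by nra.
  replace (- x ^ 2 / (4 * (s / 2))) with (- (x ^ 2 / (4 * s)) + - (x ^ 2 / (4 * s)))
    by (field; lra).
  rewrite exp_plus.
  assert (0 < sqrt (4 * PI * (s / 2))) by (apply sqrt_lt_R0; nra).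
  assert (0 < sqrt 2) by (apply sqrt_lt_R0; lra).
  replace (- x ^ 2 / (4 * s)) with (- (x ^ 2 / (4 * s))) by (field; lra).
  field. lra.
Qed.

Lemma Rpower_pos x y : 0 < Rpower x y.
Proof. apply exp_pos. Qed.

Lemma Gammad_pos d r2 s : 0 < Gammad d r2 s.
Proof. apply Rmult_lt_0_compat; [apply Rinv_0_lt_compat, Rpower_pos | apply exp_pos]. Qed.

Section GammadTimeComparison.
Variables (d : nat) (r2 s0 s s1 : R).
Hypotheses (Hr2 : 0 <= r2) (Hs0 : 0 < s0) (Hs0s : s0 <= s) (Hss1 : s <= s1).

Let p := INR d / 2.

Lemma Rpower_4PI_ratio : Rpower (4 * PI * s1) p = Rpower (s1 / s0) p * Rpower (4 * PI * s0) p.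
Proof.
  pose proof PI_RGT_0.
  rewrite Rpower_mult_distr by (try apply Rdiv_lt_0_compat; nra). f_equal. field. lra.
Qed.

Lemma Rpower_4PI_le u v : 0 < u <= v -> Rpower (4 * PI * u) p <= Rpower (4 * PI * v) p.
Proof.
  intros Huv. pose proof PI_RGT_0. pose proof (pos_INR d).
  apply Rle_Rpower_l; [unfold p; lra | nra].
Qed.

Lemma exp_heat_le u v : 0 < u <= v -> exp (- r2 / (4 * u)) <= exp (- r2 / (4 * v)).
Proof.
  intros Huv. apply exp_le. unfold Rdiv. rewrite !Ropp_mult_distr_l_reverse.
  apply Ropp_le_contravar, Rmult_le_compat_l; [lra|]. apply Rinv_le_contravar; lra.
Qed.

Lemma Gammad_le_ratio : Gammad d r2 s <= Rpower (s1 / s0) p * Gammad d r2 s1.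
Proof.
  unfold Gammad. fold p. rewrite Rpower_4PI_ratio.
  pose proof (Rpower_pos (s1 / s0) p). pose proof (Rpower_pos (4 * PI * s0) p).
  replace (Rpower (s1 / s0) p * (/ (Rpower (s1 / s0) p * Rpower (4 * PI * s0) p)
             * exp (- r2 / (4 * s1))))
    with (/ Rpower (4 * PI * s0) p * exp (- r2 / (4 * s1))) by (field; lra).
  apply Rmult_le_compat; [left; apply Rinv_0_lt_compat, Rpower_pos | left; apply exp_pos | |].
  - apply Rinv_le_contravar; [lra|]. apply Rpower_4PI_le. lra.
  - apply exp_heat_le. lra.
Qed.

Lemma Gammad_ge_ratio : / Rpower (s1 / s0) p * Gammad d r2 s0 <= Gammad d r2 s.
Proof.
  unfold Gammad. fold p.
  pose proof (Rpower_pos (s1 / s0) p). pose proof (Rpower_pos (4 * PI * s0) p).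
  replace (/ Rpower (s1 / s0) p * (/ Rpower (4 * PI * s0) p * exp (- r2 / (4 * s0))))
    with (/ Rpower (4 * PI * s1) p * exp (- r2 / (4 * s0)))
    by (rewrite Rpower_4PI_ratio; field; lra).
  apply Rmult_le_compat; [left; apply Rinv_0_lt_compat, Rpower_pos | left; apply exp_pos | |].
  - apply Rinv_le_contravar; [apply Rpower_pos|]. apply Rpower_4PI_le. lra.
  - apply exp_heat_le. lra.
Qed.

End GammadTimeComparison.

Lemma continuous_Gammad_comp d r2 (T dT : R -> R) z :
  (forall w, is_derive T w (dT w)) -> 0 < T z -> continuous (fun w => Gammad d r2 (T w)) z.
Proof.
  intros HT Hz. pose proof PI_RGT_0.
  apply (@ex_derive_continuous R_AbsRing R_NormedModule). unfold Gammad, Rpower.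
  apply (ex_derive_mult (fun w => / exp (INR d / 2 * ln (4 * PI * T w)))
                        (fun w => exp (- r2 / (4 * T w)))).
  - apply (ex_derive_comp (fun x => / exp (INR d / 2 * ln (4 * PI * x))) T).
    + auto_derive. repeat split; [nra | apply Rgt_not_eq, exp_pos].
    + eexists; apply HT.
  - apply (ex_derive_comp (fun x => exp (- r2 / (4 * x))) T).
    + auto_derive. lra.
    + eexists; apply HT.
Qed.

(** * The one-dimensional boundary integral *)

Section Flux.
Variables (eps delta a t : R).
Hypotheses (Heps : 0 < eps) (Hdelta : 0 < delta) (Ha : 0 <= a) (Ht : 0 < t).

(* In the notation of the introduction: [fs] = s, [fxi] = ξ, [fA] = A, [fB] = B,
   [flux] = J, [barrier] = Φ, [kappa] = κ and [fweight] = 1 + 2s/B². *)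

Definition fs (z : R) : R := (t - z) / eps.
Definition fxi (z : R) : R := a + z / delta.
Definition fA : R := a + t / delta.
Definition fB (z : R) : R := a + (2 * t - z) / delta.
Definition fE (z : R) : R := exp (- fxi z ^ 2 / (4 * fs z)).
Definition flux (z : R) : R := fxi z * fE z / (fs z * sqrt (4 * PI * fs z)).
Definition fweight (z : R) : R := 1 + 2 * fs z / fB z ^ 2.
Definition barrier (z : R) : R := 4 * sqrt (fs z) / fB z * fE z.
Definition kappa : R := eps / sqrt (4 * PI).
(* [flux] and [barrier] only make sense for [z < t]; both tend to 0 at [t], so cut off there
   they become continuous on all of [R], as the fundamental theorem of calculus needs. *)
Definition fluxT : R -> R := trunc_at t flux.
Definition barrierT : R -> R := trunc_at t barrier.
Definition flux_int : R := RInt fluxT 0 t.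

Lemma fs_pos z : z < t -> 0 < fs z.
Proof. intros Hz. apply Rdiv_lt_0_compat; lra. Qed.

Lemma fs_le z z' : z <= z' -> fs z' <= fs z.
Proof. intros Hz. apply Rmult_le_compat_r; [left; apply Rinv_0_lt_compat |]; lra. Qed.

Lemma fA_pos : 0 < fA.
Proof. unfold fA. assert (0 < t / delta) by (apply Rdiv_lt_0_compat; lra). lra. Qed.

Lemma fA_le_fB z : z <= t -> fA <= fB z.
Proof.
  intros Hz. unfold fA, fB. apply Rplus_le_compat_l, Rmult_le_compat_r;
    [left; apply Rinv_0_lt_compat |]; lra.
Qed.

Lemma fxi_bounds z : 0 <= z <= t -> 0 <= fxi z <= fA.
Proof.
  intros Hz. unfold fxi, fA. assert (0 <= z / delta) by (apply Rdiv_le_0_compat; lra).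
  assert (z / delta <= t / delta) by (apply Rmult_le_compat_r; [left; apply Rinv_0_lt_compat |]; lra).
  lra.
Qed.

Lemma fE_pos z : 0 < fE z.
Proof. apply exp_pos. Qed.

Lemma fE_le_1 z : z < t -> fE z <= 1.
Proof.
  intros Hz. rewrite <- exp_0. apply exp_le. pose proof (fs_pos z Hz).
  assert (0 <= fxi z ^ 2 / (4 * fs z)) by (apply Rdiv_le_0_compat; [apply pow2_ge_0 | lra]).
  unfold Rdiv in *. lra.
Qed.

Lemma kappa_bounds : eps / 4 <= kappa <= eps.
Proof.
  pose proof sqrt_4PI_bounds. unfold kappa. split.
  - apply Rmult_le_compat_l; [lra|]. apply Rinv_le_contravar; lra.
  - apply Rle_div_l; nra.
Qed.

Lemma sqrt_4PI_fs z : z < t -> sqrt (4 * PI * fs z) = sqrt (4 * PI) * sqrt (fs z).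
Proof. intros Hz. pose proof (fs_pos z Hz). pose proof PI_RGT_0. apply sqrt_mult; lra. Qed.

Lemma flux_nonneg z : 0 <= z < t -> 0 <= flux z.
Proof.
  intros Hz. pose proof (fs_pos z (proj2 Hz)). pose proof (fE_pos z).
  pose proof (fxi_bounds z ltac:(lra)). pose proof sqrt_4PI_bounds.
  unfold flux. rewrite sqrt_4PI_fs by lra.
  assert (0 < sqrt (fs z)) by (apply sqrt_lt_R0; lra).
  apply Rdiv_le_0_compat; [nra | apply Rmult_lt_0_compat; nra].
Qed.

Lemma flux_Gamma1 z : z < t -> -2 * dGamma1 (fxi z) (fs z) = flux z.
Proof.
  intros Hz. pose proof (fs_pos z Hz). pose proof PI_RGT_0.
  rewrite dGamma1_E, Gamma1_E by lra. unfold flux, fE.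
  assert (0 < sqrt (4 * PI * fs z)) by (apply sqrt_lt_R0; nra).
  field. lra.
Qed.

Lemma continuous_flux z : z < t -> continuous flux z.
Proof.
  intros Hz. pose proof (fs_pos z Hz). pose proof PI_RGT_0.
  apply (@ex_derive_continuous R_AbsRing R_NormedModule).
  unfold flux, fE, fxi, fs in *. auto_derive.
  assert (0 < sqrt (4 * PI * ((t - z) / eps))) by (apply sqrt_lt_R0; nra).
  unfold Rdiv, Rminus in *. repeat split; nra.
Qed.

Lemma barrier_derive z : z < t -> is_derive barrier z (- flux z * fweight z / kappa).
Proof.
  intros Hz. pose proof (fs_pos z Hz) as Hs. pose proof (fA_le_fB z (Rlt_le _ _ Hz)).
  pose proof fA_pos. pose proof sqrt_4PI_bounds.
  unfold flux, fweight, kappa. rewrite sqrt_4PI_fs by exact Hz.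
  unfold barrier, fE, fxi, fB, fs in *.
  auto_derive.
  - repeat split; lra.
  - unfold Rminus, Rdiv in *. set (r := sqrt ((t + - z) * / eps)).
    assert (Hr : r * r = (t + - z) * / eps) by (apply sqrt_sqrt; lra).
    assert (Hr0 : 0 < r) by (apply sqrt_lt_R0; lra).
    set (E := exp _). clearbody r E.
    assert (Hz' : z = t - eps * (r * r)) by (rewrite Hr; field; lra).
    subst z. field. repeat split; try lra; nra.
Qed.
Lemma flux_le_near_end z : t / 2 < z < t -> flux z <= 64 * (2 * delta / t) ^ 3 * sqrt (fs z).
Proof.
  intros Hz. pose proof (fs_pos z (proj2 Hz)) as Hs. pose proof sqrt_4PI_bounds as Hp.
  assert (Hc : 0 < t / (2 * delta)) by (apply Rdiv_lt_0_compat; lra).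
  assert (Hx : t / (2 * delta) <= fxi z).
  { unfold fxi. assert (t / (2 * delta) <= z / delta)
      by (unfold Rdiv; apply Rmult_le_reg_l with (2 * delta); [lra | field_simplify; lra]).
    lra. }
  pose proof (exp_gauss_mul_pow4_le (fxi z) (fs z) Hs) as HE. fold (fE z) in HE.
  unfold flux. rewrite sqrt_4PI_fs by lra.
  set (x := fxi z) in *. set (r := sqrt (fs z)). set (p := sqrt (4 * PI)) in *.
  set (c := 2 * delta / t).
  assert (Hr : r * r = fs z) by (apply sqrt_sqrt; lra).
  assert (Hr0 : 0 < r) by (apply sqrt_lt_R0; lra).
  rewrite <- Hr in HE. replace ((r * r) ^ 2) with (r ^ 4) in HE by ring.
  assert (Hw : / x <= c)
    by (unfold c; replace (2 * delta / t) with (/ (t / (2 * delta))) by (field; lra);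
        apply Rinv_le_contravar; lra).
  assert (Hw0 : 0 < / x) by (apply Rinv_0_lt_compat; lra).
  assert (HxE : x * fE z <= 64 * r ^ 4 * c ^ 3).
  { replace (x * fE z) with (fE z * x ^ 4 * (/ x) ^ 3) by (field; lra).
    apply Rmult_le_compat; [| apply pow_le; lra | lra | apply pow_incr; lra].
    apply Rmult_le_pos; [left; apply fE_pos | apply pow_le; lra]. }
  rewrite <- Hr. apply Rle_div_l; [nra|].
  assert (0 <= 64 * r ^ 4 * c ^ 3).
  { pose proof (pow_lt r 4 Hr0). pose proof (pow_le c 3 ltac:(lra)). nra. }
  replace (64 * c ^ 3 * r * (r * r * (p * r))) with (64 * r ^ 4 * c ^ 3 * p) by ring.
  nra.
Qed.

Lemma continuous_trunc_at_end_sqrt f K rho : 0 < rho ->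
  (forall z, t - rho < z < t -> Rabs (f z) <= K * sqrt (fs z)) ->
  continuous (trunc_at t f) t.
Proof.
  intros Hr Hb. apply (continuous_trunc_at_end t f (fun z => K * sqrt (fs z)) rho Hr Hb).
  - apply (@continuous_mult R_UniformSpace R_AbsRing (fun _ => K)); [apply continuous_const|].
    apply continuous_sqrt_comp, (@ex_derive_continuous R_AbsRing R_NormedModule).
    unfold fs. auto_derive. lra.
  - unfold fs. rewrite Rminus_diag, Rdiv_0_l, sqrt_0. ring.
Qed.

Lemma continuous_fluxT z : continuous fluxT z.
Proof.
  destruct (Rtotal_order z t) as [Hz | [-> | Hz]].
  - apply continuous_trunc_at_lt, continuous_flux; exact Hz.
  - apply (continuous_trunc_at_end_sqrt flux (64 * (2 * delta / t) ^ 3) (t / 2)); [lra|].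
    intros z Hz. rewrite Rabs_right by (apply Rle_ge, flux_nonneg; lra).
    apply flux_le_near_end. lra.
  - apply continuous_trunc_at_gt, Hz.
Qed.

Lemma fluxT_nonneg z : 0 <= z -> 0 <= fluxT z.
Proof.
  intros Hz. unfold fluxT, trunc_at. destruct (Rlt_dec z t); [apply flux_nonneg|]; lra.
Qed.

Lemma ex_RInt_fluxT u v : ex_RInt fluxT u v.
Proof. apply (@ex_RInt_continuous R_CompleteNormedModule). intros; apply continuous_fluxT. Qed.

Lemma barrier_bounds z : z < t -> 0 <= barrier z <= 4 / fA * sqrt (fs z).
Proof.
  intros Hz. pose proof (fE_pos z). pose proof (fE_le_1 z Hz). pose proof fA_pos.
  pose proof (fA_le_fB z (Rlt_le _ _ Hz)). pose proof (sqrt_pos (fs z)).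
  assert (/ fB z <= / fA) by (apply Rinv_le_contravar; lra).
  assert (0 < / fB z) by (apply Rinv_0_lt_compat; lra).
  unfold barrier, Rdiv. set (q := 4 * sqrt (fs z)).
  assert (0 <= q * / fB z) by (unfold q; apply Rmult_le_pos; lra).
  assert (q * / fB z <= q * / fA) by (apply Rmult_le_compat_l; unfold q; lra).
  replace (4 * / fA * sqrt (fs z)) with (q * / fA) by (unfold q; ring).
  split; nra.
Qed.

Lemma continuity_pt_barrierT z : z <= t -> continuity_pt barrierT z.
Proof.
  intros Hz. apply continuity_pt_filterlim. destruct Hz as [Hz | ->].
  - apply continuous_trunc_at_lt; [exact Hz|].
    apply (@ex_derive_continuous R_AbsRing R_NormedModule).
    eexists; apply barrier_derive, Hz.
  - apply (continuous_trunc_at_end_sqrt barrier (4 / fA) t); [exact Ht|].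
    intros z Hz. destruct (barrier_bounds z (proj2 Hz)).
    rewrite Rabs_right; lra.
Qed.

Lemma fweight_bounds tau0 z : tau0 <= z < t -> 1 <= fweight z <= 1 + 2 * fs tau0 / fA ^ 2.
Proof.
  intros Hz. pose proof (fs_pos z (proj2 Hz)). pose proof (fs_le tau0 z (proj1 Hz)).
  pose proof fA_pos. pose proof (fA_le_fB z ltac:(lra)).
  unfold fweight. split.
  - assert (0 <= 2 * fs z / fB z ^ 2) by (apply Rdiv_le_0_compat; nra). lra.
  - apply Rplus_le_compat_l. unfold Rdiv. apply Rmult_le_compat; [lra | | lra |].
    + left. apply Rinv_0_lt_compat. nra.
    + apply Rinv_le_contravar; nra.
Qed.

Lemma is_derive_barrierT_scal c z : z < t ->
  is_derive (fun x => c * barrierT x) z (- c / kappa * (flux z * fweight z)).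
Proof.
  intros Hz. pose proof (proj1 kappa_bounds).
  replace (- c / kappa * (flux z * fweight z)) with (c * (- flux z * fweight z / kappa))
    by (field; lra).
  apply (is_derive_scal barrierT), is_derive_trunc_at_lt, barrier_derive; exact Hz.
Qed.

Lemma continuity_pt_barrierT_scal c z : z <= t -> continuity_pt (fun x => c * barrierT x) z.
Proof.
  intros Hz. apply continuity_pt_filterlim.
  apply (@continuous_mult R_UniformSpace R_AbsRing (fun _ => c));
    [apply continuous_const | apply continuity_pt_filterlim, continuity_pt_barrierT, Hz].
Qed.

Lemma flux_tail_le tau0 : 0 <= tau0 < t -> RInt fluxT tau0 t <= kappa * barrier tau0.
Proof.
  intros H0. pose proof (proj1 kappa_bounds).
  replace (kappa * barrier tau0)
    with (- kappa * barrierT t - - kappa * barrierT tau0)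
    by (unfold barrierT; rewrite trunc_at_ge, trunc_at_lt by lra; ring).
  apply (RInt_le_increment fluxT (fun z => - kappa * barrierT z)
           (trunc_at t (fun z => - - kappa / kappa * (flux z * fweight z)))); [lra | | | |].
  - intros z. apply continuous_fluxT.
  - intros z Hz. rewrite trunc_at_lt by lra. apply is_derive_barrierT_scal. lra.
  - intros z Hz. apply continuity_pt_barrierT_scal. lra.
  - intros z [Hz1 [Hz2 | ->]]; unfold fluxT; [|rewrite !trunc_at_ge; lra].
    rewrite !trunc_at_lt by exact Hz2.
    replace (- - kappa / kappa) with 1 by (field; lra).
    pose proof (flux_nonneg z ltac:(lra)). pose proof (fweight_bounds z z ltac:(lra)). nra.
Qed.

Lemma flux_tail_ge tau0 : 0 <= tau0 < t ->
  kappa * barrier tau0 / (1 + 2 * fs tau0 / fA ^ 2) <= RInt fluxT tau0 t.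
Proof.
  intros H0. pose proof (proj1 kappa_bounds).
  set (q := 1 + 2 * fs tau0 / fA ^ 2).
  assert (Hq : 1 <= q) by (apply (Rle_trans _ (fweight tau0)); apply (fweight_bounds tau0); lra).
  replace (kappa * barrier tau0 / q)
    with (- (kappa / q) * barrierT t - - (kappa / q) * barrierT tau0)
    by (unfold barrierT; rewrite trunc_at_ge, trunc_at_lt by lra; field; lra).
  apply (RInt_ge_increment fluxT (fun z => - (kappa / q) * barrierT z)
           (trunc_at t (fun z => - - (kappa / q) / kappa * (flux z * fweight z)))); [lra | | | |].
  - intros z. apply continuous_fluxT.
  - intros z Hz. rewrite trunc_at_lt by lra. apply is_derive_barrierT_scal. lra.
  - intros z Hz. apply continuity_pt_barrierT_scal. lra.
  - intros z [Hz1 [Hz2 | ->]]; unfold fluxT; [|rewrite !trunc_at_ge; lra].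
    rewrite !trunc_at_lt by exact Hz2.
    replace (- - (kappa / q) / kappa * (flux z * fweight z)) with (flux z * (fweight z / q))
      by (field; lra).
    pose proof (flux_nonneg z ltac:(lra)). pose proof (fweight_bounds tau0 z ltac:(lra)) as Hw.
    fold q in Hw. assert (fweight z / q <= 1) by (apply Rle_div_l; lra). nra.
Qed.

Lemma is_derive_inv_sqrt_fs z : z < t ->
  is_derive (fun x => 2 * fA * kappa * / sqrt (fs x)) z (fA / (fs z * sqrt (4 * PI * fs z))).
Proof.
  intros Hz. pose proof (fs_pos z Hz) as Hs. pose proof sqrt_4PI_bounds.
  rewrite sqrt_4PI_fs by exact Hz. unfold kappa. unfold fs in *.
  auto_derive.
  - repeat split; [lra | apply Rgt_not_eq, sqrt_lt_R0; lra].
  - unfold Rminus, Rdiv in *. set (r := sqrt ((t + - z) * / eps)).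
    assert (Hr : r * r = (t + - z) * / eps) by (apply sqrt_sqrt; lra).
    assert (Hr0 : 0 < r) by (apply sqrt_lt_R0; lra).
    clearbody r. rewrite <- Hr. field. lra.
Qed.

Lemma flux_head_le tau1 : 0 <= tau1 < t ->
  RInt fluxT 0 tau1 <= 2 * fA * kappa * (/ sqrt (fs tau1) - / sqrt (fs 0)).
Proof.
  intros H1. rewrite Rmult_minus_distr_l.
  apply (RInt_le_increment fluxT (fun x => 2 * fA * kappa * / sqrt (fs x))
           (fun z => fA / (fs z * sqrt (4 * PI * fs z)))); [lra | | | |].
  - intros z. apply continuous_fluxT.
  - intros z Hz. apply is_derive_inv_sqrt_fs. lra.
  - intros z Hz. apply continuity_pt_filterlim.
    apply (@ex_derive_continuous R_AbsRing R_NormedModule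
             (fun x => 2 * fA * kappa * / sqrt (fs x))).
    eexists; apply is_derive_inv_sqrt_fs; lra.
  - intros z Hz. unfold fluxT. rewrite trunc_at_lt by lra. unfold flux.
    pose proof (fs_pos z ltac:(lra)). pose proof PI_RGT_0.
    assert (0 < sqrt (4 * PI * fs z)) by (apply sqrt_lt_R0; nra).
    pose proof (fxi_bounds z ltac:(lra)). pose proof (fE_pos z). pose proof (fE_le_1 z ltac:(lra)).
    unfold Rdiv. apply Rmult_le_compat_r; [left; apply Rinv_0_lt_compat; nra | nra].
Qed.

Lemma flux_int_split tau0 : flux_int = RInt fluxT 0 tau0 + RInt fluxT tau0 t.
Proof. symmetry. apply (RInt_Chasles fluxT); apply ex_RInt_fluxT. Qed.

Lemma kappa_barrier_0 : kappa * barrier 0 = 4 * t * Gamma1 a (t / eps) / (a + 2 * t / delta).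
Proof.
  assert (HS : 0 < t / eps) by (apply Rdiv_lt_0_compat; lra).
  assert (HB : 0 < a + 2 * t / delta)
    by (assert (0 < 2 * t / delta) by (apply Rdiv_lt_0_compat; lra); lra).
  pose proof sqrt_4PI_bounds. pose proof PI_RGT_0.
  rewrite Gamma1_E by exact HS. unfold kappa, barrier, fE.
  replace (fs 0) with (t / eps) by (unfold fs; f_equal; ring).
  replace (fxi 0) with a by (unfold fxi; field; lra).
  replace (fB 0) with (a + 2 * t / delta) by (unfold fB; field; lra).
  rewrite (sqrt_mult (4 * PI) (t / eps)) by lra.
  set (r := sqrt (t / eps)). assert (Hr : r * r = t / eps) by (apply sqrt_sqrt; lra).
  assert (Hr0 : 0 < r) by (apply sqrt_lt_R0; lra).
  set (E := exp _). clearbody r E.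
  replace t with (eps * (r * r)) at 2 by (rewrite Hr; field; lra).
  field. repeat split; try lra. nra.
Qed.

Lemma flux_int_le_Gamma1 : flux_int <= 4 * t * Gamma1 a (t / eps) / (a + 2 * t / delta).
Proof.
  rewrite <- kappa_barrier_0, (flux_int_split 0), RInt_point.
  rewrite Rplus_0_l. apply flux_tail_le. lra.
Qed.

Lemma flux_int_ge_Gamma1 :
  4 * t * Gamma1 a (t / eps) / ((a + 2 * t / delta) * (1 + 2 * (t / eps) / fA ^ 2)) <= flux_int.
Proof.
  assert (HB : 0 < a + 2 * t / delta)
    by (assert (0 < 2 * t / delta) by (apply Rdiv_lt_0_compat; lra); lra).
  assert (Hq : 0 < 1 + 2 * fs 0 / fA ^ 2).
  { pose proof (fweight_bounds 0 0 ltac:(lra)). unfold fweight in *. lra. }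
  replace (t / eps) with (fs 0) at 2 by (unfold fs; f_equal; ring).
  rewrite Rdiv_mult_distr, <- kappa_barrier_0, (flux_int_split 0), RInt_point.
  rewrite Rplus_0_l. apply flux_tail_ge. lra.
Qed.

Lemma RInt_fluxT_nonneg u v : 0 <= u <= v -> 0 <= RInt fluxT u v.
Proof.
  intros Huv. apply RInt_ge_0; [lra | apply ex_RInt_fluxT |].
  intros z Hz. apply fluxT_nonneg. lra.
Qed.

Lemma flux_tail_le_sqrt tau0 : 0 <= tau0 < t ->
  RInt fluxT tau0 t <= 4 * eps * sqrt (fs tau0) / fA.
Proof.
  intros H0. pose proof (flux_tail_le tau0 H0). pose proof (barrier_bounds tau0 (proj2 H0)).
  pose proof kappa_bounds. pose proof fA_pos. pose proof (sqrt_pos (fs tau0)).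
  assert (0 <= 4 / fA * sqrt (fs tau0)) by (apply Rmult_le_pos; [apply Rdiv_le_0_compat|]; lra).
  replace (4 * eps * sqrt (fs tau0) / fA) with (eps * (4 / fA * sqrt (fs tau0))) by (field; lra).
  nra.
Qed.

Lemma flux_int_le_6eps : flux_int <= 6 * eps.
Proof.
  pose proof fA_pos. pose proof kappa_bounds.
  assert (Hfs0 : fs 0 = t / eps) by (unfold fs; f_equal; ring).
  destruct (Rle_lt_dec (t / eps) (fA ^ 2)) as [Hc | Hc].
  - assert (Hs : sqrt (fs 0) <= fA)
      by (rewrite <- (sqrt_pow2 fA) by lra; apply sqrt_le_1_alt; lra).
    pose proof (flux_tail_le_sqrt 0 ltac:(lra)).
    assert (4 * eps * sqrt (fs 0) / fA <= 4 * eps) by (apply Rle_div_l; nra).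
    rewrite (flux_int_split 0), RInt_point, Rplus_0_l. lra.
  - set (tau1 := t - eps * fA ^ 2).
    assert (Ht1 : 0 <= tau1 < t).
    { assert (eps * fA ^ 2 < t) by (rewrite Rmult_comm; apply Rlt_div_r; lra).
      assert (0 < eps * fA ^ 2) by (apply Rmult_lt_0_compat; nra).
      unfold tau1. lra. }
    assert (Hs1 : fs tau1 = fA ^ 2) by (unfold fs, tau1; field; lra).
    pose proof (flux_head_le tau1 Ht1) as Hh. pose proof (flux_tail_le_sqrt tau1 Ht1) as Htl.
    rewrite Hs1, sqrt_pow2 in Hh, Htl by lra.
    assert (0 < sqrt (fs 0)) by (apply sqrt_lt_R0, fs_pos; lra).
    assert (0 < / sqrt (fs 0)) by (apply Rinv_0_lt_compat; lra).
    replace (2 * fA * kappa * (/ fA - / sqrt (fs 0)))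
      with (2 * kappa - 2 * fA * kappa * / sqrt (fs 0)) in Hh by (field; lra).
    replace (4 * eps * fA / fA) with (4 * eps) in Htl by (field; lra).
    assert (0 <= 2 * fA * kappa * / sqrt (fs 0)) by (apply Rmult_le_pos; [nra | lra]).
    rewrite (flux_int_split tau1). lra.
Qed.

Lemma barrier_ge_exp tau0 : 0 <= tau0 < t -> fs tau0 = fA ^ 2 / 36 -> fB tau0 <= 2 * fA ->
  exp (-9) / 3 <= barrier tau0.
Proof.
  intros H0 Hs HB. pose proof fA_pos. pose proof (fA_le_fB tau0 ltac:(lra)).
  pose proof (fxi_bounds tau0 ltac:(lra)). pose proof (exp_pos (-9)).
  assert (HE : exp (-9) <= fE tau0).
  { apply exp_le. rewrite Hs.
    assert (fxi tau0 ^ 2 / (4 * (fA ^ 2 / 36)) <= 9) by (apply Rle_div_l; nra).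
    replace (- fxi tau0 ^ 2 / (4 * (fA ^ 2 / 36)))
      with (- (fxi tau0 ^ 2 / (4 * (fA ^ 2 / 36)))) by (field; lra).
    lra. }
  assert (Hq : 1 / 3 <= 4 * sqrt (fs tau0) / fB tau0).
  { rewrite Hs. replace (fA ^ 2 / 36) with ((fA / 6) ^ 2) by field.
    rewrite sqrt_pow2 by lra. apply (Rle_div_r _ _ (fB tau0)); lra. }
  unfold barrier. nra.
Qed.

Lemma flux_int_ge_D1 : eps * a ^ 2 < 6 * t -> t < 12 * delta ^ 2 / eps ->
  eps * exp (-9) / 16 <= flux_int.
Proof.
  intros Hr Ht12.
  assert (Het : t * eps < 12 * delta ^ 2) by (apply Rlt_div_r; lra).
  pose proof fA_pos.
  set (ia := t / delta). assert (Hia : t = delta * ia) by (unfold ia; field; lra).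
  assert (Hia0 : 0 < ia) by (unfold ia; apply Rdiv_lt_0_compat; lra).
  assert (HfA : fA = a + ia) by reflexivity.
  assert (Hei : eps * ia < 12 * delta) by nra.
  assert (Hea : eps * a < 9 * delta) by nra.
  assert (HA2 : eps * fA ^ 2 < 36 * t) by (rewrite HfA, Hia; nra).
  set (tau0 := t - eps * fA ^ 2 / 36).
  assert (Ht0 : 0 <= tau0 < t).
  { unfold tau0. assert (0 < eps * fA ^ 2) by (apply Rmult_lt_0_compat; nra). lra. }
  assert (Hs0 : fs tau0 = fA ^ 2 / 36) by (unfold fs, tau0; field; lra).
  assert (HB : fB tau0 <= 2 * fA).
  { replace (fB tau0) with (fA + eps * fA ^ 2 / (36 * delta))
      by (unfold fB, tau0; rewrite HfA; unfold ia; field; lra).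
    assert (eps * fA ^ 2 / (36 * delta) <= fA) by (apply Rle_div_l; nra). lra. }
  pose proof (barrier_ge_exp tau0 Ht0 Hs0 HB).
  pose proof (flux_tail_ge tau0 Ht0) as Htail. rewrite Hs0 in Htail.
  replace (1 + 2 * (fA ^ 2 / 36) / fA ^ 2) with (19 / 18) in Htail by (field; lra).
  pose proof (RInt_fluxT_nonneg 0 tau0 ltac:(lra)).
  pose proof kappa_bounds. pose proof (exp_pos (-9)).
  rewrite (flux_int_split tau0). nra.
Qed.

Lemma flux_int_ge_half_time c : 0 <= c ->
  c * sqrt 2 * exp (- (eps * a ^ 2 / (4 * t)))
    * ((a + 2 * t / delta) * (1 + 2 * (t / eps) / fA ^ 2)) <= 4 * t ->
  c * Gamma1 a (t / (2 * eps)) <= flux_int.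
Proof.
  intros Hc Hk. eapply Rle_trans; [|apply flux_int_ge_Gamma1].
  assert (HS : 0 < t / eps) by (apply Rdiv_lt_0_compat; lra).
  pose proof (Gamma1_pos a (t / eps) HS). pose proof fA_pos.
  assert (0 < a + 2 * t / delta)
    by (assert (0 < 2 * t / delta) by (apply Rdiv_lt_0_compat; lra); lra).
  assert (0 < 1 + 2 * (t / eps) / fA ^ 2)
    by (assert (0 <= 2 * (t / eps) / fA ^ 2) by (apply Rdiv_le_0_compat; nra); lra).
  replace (t / (2 * eps)) with (t / eps / 2) by (field; lra).
  rewrite Gamma1_half_time by exact HS.
  replace (a ^ 2 / (4 * (t / eps))) with (eps * a ^ 2 / (4 * t)) by (field; lra).
  apply (Rle_div_r _ _ ((a + 2 * t / delta) * (1 + 2 * (t / eps) / fA ^ 2))); [nra|].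
  nra.
Qed.

Lemma fweight0_le r : t / eps <= r * fA ^ 2 -> 1 + 2 * (t / eps) / fA ^ 2 <= 1 + 2 * r.
Proof.
  intros H. pose proof fA_pos. apply Rplus_le_compat_l.
  apply Rle_div_l; [nra | lra].
Qed.

Lemma flux_int_ge_far c : 0 <= c -> eps * a ^ 2 >= 6 * t ->
  c * (a + 2 * t / delta) <= 2 * t + eps * a ^ 2 / 2 ->
  c * Gamma1 a (t / (2 * eps)) <= flux_int.
Proof.
  intros Hc Hr Hk. apply flux_int_ge_half_time; [exact Hc|].
  assert (Hq : 1 + 2 * (t / eps) / fA ^ 2 <= 1 + 2 * (1 / 6)).
  { apply fweight0_le, Rle_div_l; [lra|].
    assert (a <= fA) by (unfold fA; assert (0 < t / delta) by (apply Rdiv_lt_0_compat; lra); lra).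
    assert (a ^ 2 <= fA ^ 2) by nra. nra. }
  set (u := eps * a ^ 2 / (4 * t)).
  assert (Hu0 : 0 <= u) by (unfold u; apply Rdiv_le_0_compat; nra).
  assert (Hu : 2 * t * (1 + u) = 2 * t + eps * a ^ 2 / 2) by (unfold u; field; lra).
  pose proof (exp_neg_mul_1p_le u Hu0). pose proof (exp_pos (- u)).
  pose proof sqrt2_le_3_2. assert (0 < sqrt 2) by (apply sqrt_lt_R0; lra).
  assert (0 < t / eps) by (apply Rdiv_lt_0_compat; lra).
  assert (0 <= 2 * (t / eps) / fA ^ 2) by (apply Rdiv_le_0_compat; pose proof fA_pos; nra).
  set (q := 1 + 2 * (t / eps) / fA ^ 2) in *. set (X := c * (a + 2 * t / delta)) in *.
  assert (0 <= X) by (unfold X; assert (0 < 2 * t / delta) by (apply Rdiv_lt_0_compat; lra); nra).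
  assert (exp (- u) * X <= 2 * t) by nra.
  replace (c * sqrt 2 * exp (- u) * ((a + 2 * t / delta) * q)) with ((sqrt 2 * q) * (exp (- u) * X))
    by (unfold X; ring).
  assert (sqrt 2 * q <= 2) by nra. assert (0 <= exp (- u) * X) by nra. nra.
Qed.

Lemma flux_int_ge_D4 : eps * a ^ 2 >= 6 * t -> a + t / delta >= delta / eps ->
  delta / 5 * Gamma1 a (t / (2 * eps)) <= flux_int.
Proof.
  intros Hr HA. apply flux_int_ge_far; [lra | exact Hr |].
  set (ia := t / delta) in *. assert (Hia : t = delta * ia) by (unfold ia; field; lra).
  assert (Hia0 : 0 < ia) by (unfold ia; apply Rdiv_lt_0_compat; lra).
  replace (2 * t / delta) with (2 * ia) by (unfold ia; field; lra).
  assert (HA' : delta <= eps * (a + ia)) by (rewrite Rmult_comm; apply Rle_div_l; lra).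
  (* if [2 eps a < delta], then [eps ia > delta / 2] contradicts [6 delta ia <= eps a^2] *)
  assert (Hb : delta <= 2 * eps * a).
  { apply Rnot_lt_le. intros Hc.
    assert (eps * ia * delta <= (eps * a) ^ 2 / 6) by (rewrite Hia in Hr; nra).
    nra. }
  nra.
Qed.

Lemma flux_int_ge_D3 : eps * a ^ 2 >= 6 * t -> a + t / delta < delta / eps ->
  eps / 5 * ((a + t / delta) * Gamma1 a (t / (2 * eps))) <= flux_int.
Proof.
  intros Hr HA. rewrite <- Rmult_assoc. apply flux_int_ge_far; [| exact Hr |].
  { assert (0 < t / delta) by (apply Rdiv_lt_0_compat; lra).
    apply Rmult_le_pos; [apply Rdiv_le_0_compat|]; lra. }
  set (ia := t / delta) in *. assert (Hia : t = delta * ia) by (unfold ia; field; lra).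
  assert (Hia0 : 0 < ia) by (unfold ia; apply Rdiv_lt_0_compat; lra).
  replace (2 * t / delta) with (2 * ia) by (unfold ia; field; lra).
  assert (HA' : eps * (a + ia) < delta) by (rewrite Rmult_comm; apply Rlt_div_r; lra).
  assert (eps * a * ia <= t) by (rewrite Hia; nra).
  assert (eps * ia * ia <= t) by (rewrite Hia; nra).
  replace (eps / 5 * (a + ia) * (a + 2 * ia))
    with ((eps * a ^ 2 + 3 * (eps * a * ia) + 2 * (eps * ia * ia)) / 5) by field.
  nra.
Qed.

Lemma flux_int_ge_D2 : eps * a ^ 2 < 6 * t -> t >= 12 * delta ^ 2 / eps ->
  delta / 5 * Gamma1 a (t / (2 * eps)) <= flux_int.
Proof.
  intros Hr Ht12. apply flux_int_ge_half_time; [lra|].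
  assert (Het : 12 * delta ^ 2 <= t * eps) by (apply Rle_div_l; lra).
  set (ia := t / delta) in *. assert (Hia : t = delta * ia) by (unfold ia; field; lra).
  assert (Hia0 : 0 < ia) by (unfold ia; apply Rdiv_lt_0_compat; lra).
  replace (2 * t / delta) with (2 * ia) by (unfold ia; field; lra).
  assert (12 * delta <= eps * ia) by (rewrite Hia in Het; nra).
  assert (Hei : 12 * t <= eps * ia ^ 2) by (rewrite Hia; nra).
  assert (a ^ 2 <= ia ^ 2) by nra.
  assert (Hai : a <= ia) by nra.
  assert (Hq : 1 + 2 * (t / eps) / fA ^ 2 <= 1 + 2 * (1 / 12)).
  { apply fweight0_le, Rle_div_l; [lra|]. unfold fA. fold ia. nra. }
  assert (0 < t / eps) by (apply Rdiv_lt_0_compat; lra).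
  assert (0 <= 2 * (t / eps) / fA ^ 2) by (apply Rdiv_le_0_compat; pose proof fA_pos; nra).
  assert (He : exp (- (eps * a ^ 2 / (4 * t))) <= 1).
  { rewrite <- exp_0. apply exp_le.
    assert (0 <= eps * a ^ 2 / (4 * t)) by (apply Rdiv_le_0_compat; nra). lra. }
  pose proof (exp_pos (- (eps * a ^ 2 / (4 * t)))).
  pose proof sqrt2_le_3_2. assert (0 < sqrt 2) by (apply sqrt_lt_R0; lra).
  set (e := exp _) in *. set (q := 1 + 2 * (t / eps) / fA ^ 2) in *.
  assert (1 <= q) by (unfold q; lra).
  assert (sqrt 2 * e <= 3 / 2) by nra.
  assert ((a + 2 * ia) * q <= 7 / 2 * ia) by nra.
  assert (sqrt 2 * e * ((a + 2 * ia) * q) <= 3 / 2 * (7 / 2 * ia))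
    by (apply Rmult_le_compat; nra).
  replace (delta / 5 * sqrt 2 * e * ((a + 2 * ia) * q))
    with (delta / 5 * (sqrt 2 * e * ((a + 2 * ia) * q))) by ring.
  rewrite Hia. nra.
Qed.

Lemma flux_int_le_2delta : flux_int <= 2 * delta * Gamma1 a (t / eps).
Proof.
  eapply Rle_trans; [apply flux_int_le_Gamma1|].
  pose proof (Gamma1_pos a (t / eps) ltac:(apply Rdiv_lt_0_compat; lra)).
  assert (0 < 2 * t / delta) by (apply Rdiv_lt_0_compat; lra).
  apply Rle_div_l; [lra|].
  replace (2 * delta * Gamma1 a (t / eps) * (a + 2 * t / delta))
    with (Gamma1 a (t / eps) * (2 * delta * a + 4 * t)) by (field; lra).
  rewrite (Rmult_comm (4 * t)). apply Rmult_le_compat_l; nra.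
Qed.

Lemma flux_int_le_D3 : eps * a ^ 2 >= 6 * t ->
  flux_int <= eps * ((a + t / delta) * Gamma1 a (t / eps)).
Proof.
  intros Hr. eapply Rle_trans; [apply flux_int_le_Gamma1|].
  pose proof (Gamma1_pos a (t / eps) ltac:(apply Rdiv_lt_0_compat; lra)).
  assert (0 < t / delta) by (apply Rdiv_lt_0_compat; lra).
  replace (2 * t / delta) with (2 * (t / delta)) by (field; lra).
  apply Rle_div_l; [lra|].
  replace (eps * ((a + t / delta) * Gamma1 a (t / eps)) * (a + 2 * (t / delta)))
    with (Gamma1 a (t / eps) * (eps * (a + t / delta) * (a + 2 * (t / delta)))) by ring.
  assert (0 <= eps * a * (t / delta)) by (apply Rmult_le_pos; [apply Rmult_le_pos|]; lra).
  assert (0 <= eps * (t / delta) ^ 2) by (apply Rmult_le_pos; [lra | apply pow2_ge_0]).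
  rewrite (Rmult_comm (4 * t)). apply Rmult_le_compat_l; nra.
Qed.

End Flux.

Lemma lower_bound_weaken c S h I : 0 < c -> / c <= S -> 0 <= h -> c * h <= I -> / S * h <= I.
Proof.
  intros Hc HS Hh HI. assert (0 < / c) by (apply Rinv_0_lt_compat, Hc).
  assert (/ S <= c) by (rewrite <- (Rinv_inv c); apply Rinv_le_contravar; lra). nra.
Qed.

Lemma upper_bound_weaken c S h I : c <= S -> 0 <= h -> I <= c * h -> I <= S * h.
Proof. intros HS Hh HI. nra. Qed.

Lemma flux_int_bounds eps delta : 0 < eps -> 0 < delta ->
  exists S, 0 < S /\ forall a t, 0 <= a -> 0 < t ->
  let I := flux_int eps delta a t in
  ((eps * a ^ 2 < 6 * t /\ t < 12 * delta ^ 2 / eps) -> / S * 1 <= I <= S * 1) /\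
  (((eps * a ^ 2 < 6 * t /\ t >= 12 * delta ^ 2 / eps) \/
    (eps * a ^ 2 >= 6 * t /\ a + t / delta >= delta / eps)) ->
     / S * Gamma1 a (t / (2 * eps)) <= I <= S * Gamma1 a (t / eps)) /\
  ((eps * a ^ 2 >= 6 * t /\ a + t / delta < delta / eps) ->
     / S * ((a + t / delta) * Gamma1 a (t / (2 * eps))) <= I /\
     I <= S * ((a + t / delta) * Gamma1 a (t / eps))).
Proof.
  intros Heps Hdelta.
  pose proof (exp_pos 9). pose proof (exp_pos (-9)).
  assert (H5d : 0 < 5 / delta) by (apply Rdiv_lt_0_compat; lra).
  assert (H5e : 0 < 5 / eps) by (apply Rdiv_lt_0_compat; lra).
  assert (H9 : 0 < 16 * exp 9 / eps) by (apply Rdiv_lt_0_compat; lra).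
  set (S := 6 * eps + 2 * delta + 16 * exp 9 / eps + 5 / delta + 5 / eps).
  assert (HS1 : / (eps * exp (-9) / 16) <= S).
  { replace (/ (eps * exp (-9) / 16)) with (16 * exp 9 / eps)
      by (replace (-9) with (Ropp 9) by ring; rewrite exp_Ropp; field; lra).
    unfold S; lra. }
  assert (HS2 : / (delta / 5) <= S) by (rewrite Rinv_div; unfold S; lra).
  assert (HS3 : / (eps / 5) <= S) by (rewrite Rinv_div; unfold S; lra).
  exists S. split; [unfold S; lra|].
  intros a t Ha Ht I.
  assert (HG1 : 0 <= Gamma1 a (t / eps)) by (left; apply Gamma1_pos, Rdiv_lt_0_compat; lra).
  assert (HG2 : 0 <= Gamma1 a (t / (2 * eps)))
    by (left; apply Gamma1_pos, Rdiv_lt_0_compat; lra).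
  assert (HA : 0 <= a + t / delta) by (assert (0 < t / delta) by (apply Rdiv_lt_0_compat; lra); lra).
  split; [|split].
  - intros [Hr1 Hr2]. split.
    + apply (lower_bound_weaken (eps * exp (-9) / 16)); [| exact HS1 | lra |].
      { apply Rdiv_lt_0_compat; [apply Rmult_lt_0_compat |]; lra. }
      rewrite Rmult_1_r. apply flux_int_ge_D1; assumption.
    + apply (upper_bound_weaken (6 * eps)); [unfold S; lra | lra |].
      rewrite Rmult_1_r. apply flux_int_le_6eps; assumption.
  - intros Hr. split.
    + apply (lower_bound_weaken (delta / 5)); [lra | exact HS2 | exact HG2 |].
      destruct Hr as [[Hr1 Hr2] | [Hr1 Hr2]];
        [apply flux_int_ge_D2 | apply flux_int_ge_D4]; assumption.
    + apply (upper_bound_weaken (2 * delta)); [unfold S; lra | exact HG1 |].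
      apply flux_int_le_2delta; assumption.
  - intros [Hr1 Hr2]. split.
    + apply (lower_bound_weaken (eps / 5)); [lra | exact HS3 | nra |].
      apply flux_int_ge_D3; assumption.
    + apply (upper_bound_weaken eps); [unfold S; lra | nra |].
      apply flux_int_le_D3; assumption.
Qed.

(** * The half-space kernel *)

Lemma sqdist_nonneg n u v : 0 <= sqdist n u v.
Proof. induction n as [|n IH]; simpl; [lra|]. pose proof (pow2_ge_0 (u n - v n)). lra. Qed.

Lemma time_path_bounds eps delta k t tau : 0 < eps -> 0 < delta -> 0 <= tau <= t ->
  Rmin delta (k * eps) / (eps * delta) * t <= (t - tau) / eps + k / delta * tau <=
  Rmax delta (k * eps) / (eps * delta) * t.
Proof.
  intros Heps Hdelta Htau.
  pose proof (Rmin_Rmax_convex delta (k * eps) (t - tau) tau ltac:(lra) ltac:(lra)) as H.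
  replace ((t - tau) / eps + k / delta * tau)
    with ((delta * (t - tau) + k * eps * tau) / (eps * delta)) by (field; lra).
  replace (t - tau + tau) with t in H by ring.
  assert (Hed : 0 < / (eps * delta)) by (apply Rinv_0_lt_compat, Rmult_lt_0_compat; lra).
  unfold Rdiv. rewrite !(Rmult_comm _ (/ (eps * delta))), !Rmult_assoc.
  split; apply Rmult_le_compat_l; lra.
Qed.

Section HeatKernel.
Variables (N : nat) (eps delta k : R) (x' y' : nat -> R) (xN yN t : R).
Hypotheses (Heps : 0 < eps) (Hdelta : 0 < delta) (Hk : 0 < k)
  (HxN : 0 <= xN) (HyN : 0 <= yN) (Ht : 0 < t).

Let T (tau : R) : R := (t - tau) / eps + k / delta * tau.
Let lam := Rmin delta (k * eps).
Let Lam := Rmax delta (k * eps).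

Lemma lam_pos : 0 < lam.
Proof.
  assert (0 < k * eps) by (apply Rmult_lt_0_compat; lra).
  unfold lam, Rmin. destruct (Rle_dec delta (k * eps)); lra.
Qed.

Lemma ex_RInt_GammaN1_fluxT :
  ex_RInt (fun tau => GammaN1 N x' y' (T tau) * fluxT eps delta (xN + yN) t tau) 0 t.
Proof.
  apply (@ex_RInt_continuous R_CompleteNormedModule). intros z Hz.
  rewrite Rmin_left, Rmax_right in Hz by lra.
  apply (@continuous_mult R_UniformSpace R_AbsRing (fun w => GammaN1 N x' y' (T w))).
  - apply (continuous_Gammad_comp _ _ T (fun _ => - / eps + k / delta)).
    + intros w. unfold T. auto_derive; [auto | field; lra].
    + pose proof (time_path_bounds eps delta k t z Heps Hdelta Hz) as HT. fold lam in HT.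
      pose proof lam_pos. assert (0 < lam / (eps * delta) * t)
        by (apply Rmult_lt_0_compat; [apply Rdiv_lt_0_compat; [|apply Rmult_lt_0_compat] |]; lra).
      unfold T. lra.
  - apply continuous_fluxT; lra.
Qed.

Lemma Hker_eq_RInt :
  Hker N eps delta k x' xN y' yN t
  = RInt (fun tau => GammaN1 N x' y' (T tau) * fluxT eps delta (xN + yN) t tau) 0 t.
Proof.
  (* [RInt_ext] and [RInt_scal] state equalities in the normed-module carrier; [field] needs
     them retyped at [R]. *)
  unfold Hker.
  rewrite (RInt_ext _ (fun tau => (- (1 / 2)) *
             (GammaN1 N x' y' (T tau) * fluxT eps delta (xN + yN) t tau))).
  - rewrite (RInt_scal _ _ _ _ ex_RInt_GammaN1_fluxT).
    set (X := RInt _ 0 t). change (scal (- (1 / 2)) X) with (- (1 / 2) * X).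
    match goal with |- ?A = ?B => change (@eq R A B) end. field.
  - intros z Hz. rewrite Rmin_left, Rmax_right in Hz by lra.
    unfold fluxT. rewrite trunc_at_lt, <- flux_Gamma1 by lra. unfold fxi, fs, T.
    match goal with |- ?A = ?B => change (@eq R A B) end. field.
Qed.

Lemma Hker_sandwich :
  let K := Rpower (Lam / lam) (INR (N - 1) / 2) in
  let I := flux_int eps delta (xN + yN) t in
  / K * GammaN1 N x' y' (lam / (eps * delta) * t) * I <= Hker N eps delta k x' xN y' yN t <=
  K * GammaN1 N x' y' (Lam / (eps * delta) * t) * I.
Proof.
  intros K I. pose proof lam_pos.
  assert (Hs0 : 0 < lam / (eps * delta) * t)
    by (apply Rmult_lt_0_compat; [apply Rdiv_lt_0_compat; [|apply Rmult_lt_0_compat] |]; lra).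
  assert (Hratio : Lam / (eps * delta) * t / (lam / (eps * delta) * t) = Lam / lam)
    by (field; repeat split; lra).
  pose proof (sqdist_nonneg (N - 1) x' y').
  assert (Hex : ex_RInt (fluxT eps delta (xN + yN) t) 0 t) by (apply ex_RInt_fluxT; lra).
  assert (HJ : forall z, 0 < z < t -> 0 <= fluxT eps delta (xN + yN) t z)
    by (intros; apply fluxT_nonneg; lra).
  unfold I, flux_int. rewrite Hker_eq_RInt, <- !(RInt_scal _ _ _ _ Hex).
  split; apply RInt_le; try lra;
    try apply ex_RInt_GammaN1_fluxT; try apply (ex_RInt_scal _ _ _ _ Hex);
    intros z Hz; apply Rmult_le_compat_r; try (apply HJ; lra);
    pose proof (time_path_bounds eps delta k t z Heps Hdelta ltac:(lra)) as HT;
    fold lam Lam in HT; unfold K, GammaN1; rewrite <- Hratio.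
  - apply Gammad_ge_ratio; unfold T; lra.
  - apply Gammad_le_ratio; unfold T; lra.
Qed.

End HeatKernel.

Lemma sandwich_compose K S hl hu Gl Gu I H : 0 < K -> 0 < S -> 0 <= Gl -> 0 <= Gu ->
  / S * hl <= I <= S * hu -> / K * Gl * I <= H <= K * Gu * I ->
  / (K * S) * hl * Gl <= H /\ H <= K * S * hu * Gu.
Proof.
  intros HK HS HGl HGu [HIl HIu] [HHl HHu].
  assert (0 < / K) by (apply Rinv_0_lt_compat, HK).
  rewrite Rinv_mult. split.
  - replace (/ K * / S * hl * Gl) with (/ K * Gl * (/ S * hl)) by ring.
    apply (Rle_trans _ (/ K * Gl * I)); [apply Rmult_le_compat_l; nra | exact HHl].
  - replace (K * S * hu * Gu) with (K * Gu * (S * hu)) by ring.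
    apply (Rle_trans _ (K * Gu * I)); [exact HHu | apply Rmult_le_compat_l; nra].
Qed.

Theorem theorem1p2 (N : nat) (eps delta k : R) :
  (2 <= N)%nat -> 0 < eps -> 0 < delta -> 0 < k ->
  let Lam := Rmax delta (k * eps) in
  let lam := Rmin delta (k * eps) in
  exists C : R, 0 < C /\
  forall (x' y' : nat -> R) (xN yN t : R),
    0 <= xN -> 0 <= yN -> 0 < t ->
    let a := xN + yN in
    let H := Hker N eps delta k x' xN y' yN t in
    let Glow := GammaN1 N x' y' (lam / (eps * delta) * t) in
    let Gup := GammaN1 N x' y' (Lam / (eps * delta) * t) in
    (* D1 *)
    ((eps * a ^ 2 < 6 * t /\ t < 12 * delta ^ 2 / eps) ->
       / C * 1 * Glow <= H /\ H <= C * 1 * Gup) /\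
    (* D2 \/ D4 *)
    (((eps * a ^ 2 < 6 * t /\ t >= 12 * delta ^ 2 / eps) \/
      (eps * a ^ 2 >= 6 * t /\ a + t / delta >= delta / eps)) ->
       / C * Gamma1 a (t / (2 * eps)) * Glow <= H /\
       H <= C * Gamma1 a (t / eps) * Gup) /\
    (* D3 *)
    ((eps * a ^ 2 >= 6 * t /\ a + t / delta < delta / eps) ->
       / C * ((a + t / delta) * Gamma1 a (t / (2 * eps))) * Glow <= H /\
       H <= C * ((a + t / delta) * Gamma1 a (t / eps)) * Gup).
Proof.
  intros _ Heps Hdelta Hk Lam lam.
  destruct (flux_int_bounds eps delta Heps Hdelta) as [S [HS Hflux]].
  set (K := Rpower (Lam / lam) (INR (N - 1) / 2)).
  exists (K * S). split; [apply Rmult_lt_0_compat; [apply Rpower_pos | exact HS]|].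
  intros x' y' xN yN t HxN HyN Ht a H Glow Gup.
  destruct (Hflux a t ltac:(unfold a; lra) Ht) as [HD1 [HD24 HD3]].
  pose proof (Hker_sandwich N eps delta k x' y' xN yN t Heps Hdelta Hk HxN HyN Ht) as Hsw.
  assert (HGl : 0 <= Glow) by (left; apply Gammad_pos).
  assert (HGu : 0 <= Gup) by (left; apply Gammad_pos).
  split; [|split]; intros Hr;
    (apply (sandwich_compose K S _ _ _ _ (flux_int eps delta a t));
     [apply Rpower_pos | exact HS | exact HGl | exact HGu | auto | exact Hsw]).
Qed.
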